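(* Let $k$ be a field of characteristic $p\ge0$ which is a finitely generated field extension of a perfect field, with algebraic closure $\overline k$. Let $X=(x_1,\dots,x_n)$ and let $\sigma=\sum_{I\in\mathbb N^n}\alpha_IX^I\in\overline k[[X]]$ with $\alpha_I\in\overline k$, and let $L=k(\{\alpha_I\mid I\in\mathbb N^n\})$. Then $\sigma$ is algebraic over $k((X))$ (the fraction field of $k[[X]]$) if and only if $[L:k]<\infty$. *)

From HB Require Import structures.
From mathcomp Require Import all_boot all_order all_algebra.
Set Implicit Arguments. Unset Strict Implicit. Unset Printing Implicit Defensive.
Import Order.TTheory GRing.Theory Num.Theory.
Local Open Scope ring_scope.

Section Defs.
Variable K : fieldType.

Definition is_subfield (S : K -> Prop) : Prop :=
  [/\ S 0, S 1,
      (forall x y, S x -> S y -> S (x - y) /\ S (x * y))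
    & (forall x, S x -> S x^-1)].

Definition gen_field (F A : K -> Prop) : K -> Prop :=
  fun x => forall S, is_subfield S -> (forall y, F y -> S y) ->
                     (forall y, A y -> S y) -> S x.

(* perfect: in characteristic p > 0 the Frobenius is surjective;
   characteristic 0 fields are perfect (the condition is then vacuous). *)
Definition perfect_subfield (F : K -> Prop) : Prop :=
  forall p : nat, p \in [pchar K] -> forall x, F x -> exists2 y, F y & y ^+ p = x.

Definition fg_over_perfect (k : K -> Prop) : Prop :=
  exists F0 : K -> Prop,
    [/\ is_subfield F0, perfect_subfield F0, (forall x, F0 x -> k x)
      & exists s : seq K, forall x, k x <-> gen_field F0 (fun y => y \in s) x].

Definition algebraic_over (k : K -> Prop) (x : K) : Prop :=
  exists2 p : {poly K}, p != 0 & (forall i, k p`_i) /\ root p x.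

Definition finite_degree (k L : K -> Prop) : Prop :=
  exists s : seq K, forall x, L x ->
    exists2 c : nat -> K, (forall i, k (c i)) & x = \sum_(i < size s) c i * s`_i.

Definition mindex (n : nat) := {ffun 'I_n -> nat}.
Definition pseries (n : nat) := mindex n -> K.

Definition mbound n (I : mindex n) := (\sum_(i < n) I i).+1.

Definition ps_mul n (f g : pseries n) : pseries n := fun I =>
  \sum_(J : {ffun 'I_n -> 'I_(mbound I)} | [forall i, (J i <= I i)%N])
     f [ffun i => nat_of_ord (J i)] * g [ffun i => (I i - J i)%N].

Definition ps_one n : pseries n := fun I => if I == [ffun => 0%N] then 1 else 0.

Fixpoint ps_exp n (f : pseries n) (j : nat) : pseries n :=
  if j is j'.+1 then ps_mul f (ps_exp f j') else @ps_one n.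

Definition ps_peval n (a : nat -> pseries n) (d : nat) (sigma : pseries n) : pseries n :=
  fun I => \sum_(j < d.+1) ps_mul (a j) (ps_exp sigma j) I.

(* sigma in kbar[[X]] is algebraic over k((X)) = Frac(k[[X]]): it is a root of a
   nonzero polynomial with coefficients in k[[X]] (denominators cleared). *)
Definition ps_algebraic n (k : K -> Prop) (sigma : pseries n) : Prop :=
  exists d (a : nat -> pseries n),
    [/\ forall j I, k (a j I),
        exists2 j, (j <= d)%N & exists I, a j I != 0
      & forall I, ps_peval a d sigma I = 0].

End Defs.

(* If the coefficients of sigma span a finite-dimensional k-space, with a
   spanning family w, then sigma * w_t is a combination of the w_i with
   coefficients in k[[X]], so sigma is a root of the characteristic polynomial
   of a matrix over k[[X]].
   Conversely, take P != 0 over k[[X]] with P(sigma) = 0 and induct on deg P.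
   If P'(sigma) != 0, let J0 be the least index (graded lexicographic order)
   in its support: the coefficient of index I + J0 in the Taylor expansion of
   P(sigma) = 0 around the truncation of sigma below I expresses sigma_I, for
   I > J0, rationally over k in terms of earlier coefficients; hence
   k(sigma_I) is generated by the finitely many sigma_I with I <= J0, which are
   algebraic over k.  If P'(sigma) = 0 but P' != 0, replace P by P'.  If
   P' = 0, then k has characteristic p > 0 and P = Q(X^p), so sigma^p is a
   root of the smaller Q; as sigma_I^p is a coefficient of sigma^p and
   k^(1/p) is finite over k (k being finitely generated over a perfect field),
   finiteness lifts from the coefficients of sigma^p to those of sigma. *)

From HB Require Import structures.
From mathcomp Require Import all_boot all_order all_algebra.
From mathcomp Require Import boolp zify ring.
Set Implicit Arguments. Unset Strict Implicit. Unset Printing Implicit Defensive.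
Import GRing.Theory.
Local Open Scope ring_scope.

(** * Multi-indices and the ring of formal power series *)

Section MultiIndex.
Variable n : nat.
Local Notation M := (mindex n).

Definition m0 : M := [ffun => 0%N].
Definition madd (I J : M) : M := [ffun i => (I i + J i)%N].
Definition msub (I J : M) : M := [ffun i => (I i - J i)%N].
Definition mle (J I : M) : bool := [forall i, (J i <= I i)%N].

Definition ord_mindex b (J : {ffun 'I_n -> 'I_b}) : M := [ffun i => nat_of_ord (J i)].
Definition mbox b : seq M := map (@ord_mindex b) (enum {ffun 'I_n -> 'I_b}).
Definition mdivs (I : M) : seq M := [seq J <- mbox (mbound I) | mle J I].

Lemma mleP (J I : M) : reflect (forall i, (J i <= I i)%N) (mle J I).
Proof. exact: forallP. Qed.

Lemma mle_refl (I : M) : mle I I.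
Proof. by apply/mleP. Qed.

Lemma mle_trans (I J L : M) : mle I J -> mle J L -> mle I L.
Proof. by move=> /mleP IJ /mleP JL; apply/mleP=> i; apply: leq_trans (IJ i) (JL i). Qed.

Lemma mle0m (I : M) : mle m0 I.
Proof. by apply/mleP=> i; rewrite ffunE. Qed.

Lemma mle_addr (I J : M) : mle I (madd I J).
Proof. by apply/mleP=> i; rewrite ffunE leq_addr. Qed.

Lemma mle_subr (I J : M) : mle (msub I J) I.
Proof. by apply/mleP=> i; rewrite ffunE leq_subr. Qed.

Lemma maddC (I J : M) : madd I J = madd J I.
Proof. by apply/ffunP=> i; rewrite !ffunE addnC. Qed.

Lemma maddK (I J : M) : msub (madd I J) I = J.
Proof. by apply/ffunP=> i; rewrite !ffunE addKn. Qed.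

Lemma msubm0 (I : M) : msub I m0 = I.
Proof. by apply/ffunP=> i; rewrite !ffunE subn0. Qed.

Lemma msubKC (I J : M) : mle J I -> madd J (msub I J) = I.
Proof. by move/mleP=> JI; apply/ffunP=> i; rewrite !ffunE subnKC. Qed.

Lemma msubK (I J : M) : mle J I -> msub I (msub I J) = J.
Proof. by move/mleP=> JI; apply/ffunP=> i; rewrite !ffunE subKn. Qed.

Lemma mem_mbox b (J : M) : (J \in mbox b) = [forall i, (J i < b)%N].
Proof.
apply/mapP/forallP => [[J' _ ->] i|J_lt]; first by rewrite ffunE.
exists [ffun i => Ordinal (J_lt i)]; first by rewrite mem_enum.
by apply/ffunP=> i; rewrite !ffunE.
Qed.

Lemma mbox_uniq b : uniq (mbox b).
Proof.
rewrite map_inj_uniq ?enum_uniq // => J J' /ffunP eqJ.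
by apply/ffunP=> i; apply/val_inj; have := eqJ i; rewrite !ffunE.
Qed.

Lemma mdivs_uniq (I : M) : uniq (mdivs I).
Proof. by rewrite filter_uniq // mbox_uniq. Qed.

Lemma mem_mdivs (I J : M) : (J \in mdivs I) = mle J I.
Proof.
rewrite mem_filter mem_mbox andb_idr // => /mleP JI; apply/forallP=> i.
by rewrite /mbound ltnS (leq_trans (JI i)) // (bigD1 i) //= leq_addr.
Qed.

Lemma perm_mdivs_sub (I : M) : perm_eq (map (msub I) (mdivs I)) (mdivs I).
Proof.
apply: uniq_perm; last first.
- move=> J; apply/mapP/idP => [[J' _ ->]|]; first by rewrite mem_mdivs mle_subr.
  by exists (msub I J); rewrite ?mem_mdivs ?mle_subr ?msubK // -mem_mdivs.
- exact: mdivs_uniq.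
rewrite map_inj_in_uniq ?mdivs_uniq // => J J'.
by rewrite !mem_mdivs => JI J'I /(congr1 (msub I)); rewrite !msubK.
Qed.

Lemma perm_mdivs_le (I J : M) : mle J I -> perm_eq (mdivs J) [seq L <- mdivs I | mle L J].
Proof.
move=> JI; apply: uniq_perm; rewrite ?filter_uniq ?mdivs_uniq ?mbox_uniq // => L.
by rewrite mem_mdivs mem_filter mem_mdivs andb_idr // => /mle_trans; apply.
Qed.

Lemma perm_mdivs_shift (I L : M) : mle L I ->
  perm_eq (map (madd L) (mdivs (msub I L))) [seq J <- mdivs I | mle L J].
Proof.
move=> /mleP LI; apply: uniq_perm.
- rewrite map_inj_uniq ?mdivs_uniq // => J J' /(congr1 (msub^~ L)).
  by rewrite /= !maddK.
- by rewrite filter_uniq // mdivs_uniq.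
move=> J; rewrite mem_filter mem_mdivs; apply/mapP/andP => [[J']|[]].
  rewrite mem_mdivs => /mleP J'le ->; split; apply/mleP=> i; rewrite ffunE;
  by move: (J'le i) (LI i); rewrite ffunE; lia.
move=> /mleP LJ /mleP JI; exists (msub J L).
  by rewrite mem_mdivs; apply/mleP=> i; rewrite !ffunE; move: (LJ i) (JI i); lia.
by apply/ffunP=> i; rewrite !ffunE subnKC.
Qed.

End MultiIndex.

Section PowerSeriesRing.
Variables (K : fieldType) (n : nat).
Local Notation M := (mindex n).
Local Notation PS := (pseries K n).

Lemma ps_mul_mdivs (f g : PS) I :
  ps_mul f g I = \sum_(J <- mdivs I) f J * g (msub I J).
Proof.
rewrite /ps_mul /mdivs /mbox big_filter big_map big_enum_cond /=.
apply: eq_big => [J|J _]; first by apply: eq_forallb => i; rewrite ffunE.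
by congr (_ * g _); apply/ffunP=> i; rewrite !ffunE.
Qed.

Definition ps_add (f g : PS) : PS := fun I => f I + g I.
Definition ps_opp (f : PS) : PS := fun I => - f I.
Definition ps_zero : PS := fun _ => 0.

Lemma ps_addA : associative ps_add.
Proof. by move=> f g h; apply: funext => I; rewrite /ps_add addrA. Qed.

Lemma ps_addC : commutative ps_add.
Proof. by move=> f g; apply: funext => I; rewrite /ps_add addrC. Qed.

Lemma ps_add0 : left_id ps_zero ps_add.
Proof. by move=> f; apply: funext => I; rewrite /ps_add add0r. Qed.

Lemma ps_addN : left_inverse ps_zero ps_opp ps_add.
Proof. by move=> f; apply: funext => I; rewrite /ps_add addNr. Qed.

HB.instance Definition _ := gen_eqMixin PS.
HB.instance Definition _ := gen_choiceMixin PS.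
HB.instance Definition _ := GRing.isZmodule.Build PS ps_addA ps_addC ps_add0 ps_addN.

Lemma ps_mulC : commutative (@ps_mul K n).
Proof.
move=> f g; apply: funext => I; rewrite !ps_mul_mdivs.
rewrite -(perm_big _ (perm_mdivs_sub I)) big_map.
by apply: eq_big_seq => J; rewrite mem_mdivs => JI; rewrite msubK // mulrC.
Qed.

Lemma ps_mulA : associative (@ps_mul K n).
Proof.
move=> f g h; apply: funext => I; rewrite !ps_mul_mdivs.
have -> : \sum_(J <- mdivs I) ps_mul f g J * h (msub I J) =
   \sum_(J <- mdivs I) \sum_(L <- mdivs I | mle L J) f L * g (msub J L) * h (msub I J).
  apply: eq_big_seq => J; rewrite mem_mdivs => JI.
  by rewrite ps_mul_mdivs (perm_big _ (perm_mdivs_le JI)) big_filter mulr_suml.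
rewrite (exchange_big_dep predT) //=; apply: eq_big_seq => L; rewrite mem_mdivs => LI.
rewrite ps_mul_mdivs mulr_sumr -big_filter -(perm_big _ (perm_mdivs_shift LI)) big_map.
apply: eq_bigr => J _; rewrite maddK mulrA; congr (_ * h _).
by apply/ffunP=> i; rewrite !ffunE subnDA.
Qed.

Lemma ps_mul1 : left_id (@ps_one K n) (@ps_mul K n).
Proof.
move=> f; apply: funext => I; rewrite ps_mul_mdivs (bigD1_seq (m0 n)) ?mdivs_uniq //=;
  last by rewrite mem_mdivs mle0m.
rewrite /ps_one eqxx mul1r msubm0 big1 ?addr0 // => J /negbTE ->; by rewrite mul0r.
Qed.

Lemma ps_mulDl : left_distributive (@ps_mul K n) ps_add.
Proof.
move=> f g h; apply: funext => I; rewrite /ps_add !ps_mul_mdivs -big_split /=.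
by apply: eq_bigr => J _; rewrite mulrDl.
Qed.

Lemma ps_one_neq0 : @ps_one K n != ps_zero.
Proof.
apply/eqP=> /(congr1 (fun f => f (m0 n))); rewrite /ps_one /ps_zero eqxx.
by move/eqP; rewrite oner_eq0.
Qed.

HB.instance Definition _ := GRing.Zmodule_isComNzRing.Build PS
   ps_mulA ps_mulC ps_mul1 ps_mulDl ps_one_neq0.

Lemma ps0E I : (0 : PS) I = 0. Proof. by []. Qed.
Lemma ps1E I : (1 : PS) I = if I == m0 n then 1 else 0. Proof. by []. Qed.
Lemma psDE (f g : PS) I : (f + g) I = f I + g I. Proof. by []. Qed.
Lemma psBE (f g : PS) I : (f - g) I = f I - g I. Proof. by []. Qed.

Lemma psME (f g : PS) I : (f * g) I = \sum_(J <- mdivs I) f J * g (msub I J).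
Proof. exact: ps_mul_mdivs. Qed.

Lemma psMnE (f : PS) m I : (f *+ m) I = f I *+ m.
Proof. by elim: m => [|m IH]; rewrite ?mulr0n // !mulrS psDE IH. Qed.

Lemma ps_sumE (T : Type) (r : seq T) (P : pred T) (F : T -> PS) I :
  (\sum_(i <- r | P i) F i) I = \sum_(i <- r | P i) F i I.
Proof. exact: (big_morph (fun f : PS => f I)). Qed.

Lemma ps_exp_expr (f : PS) j : ps_exp f j = f ^+ j.
Proof. by elim: j => [|j IH] //=; rewrite exprS IH. Qed.

Lemma ps_neq0P (f : PS) : reflect (exists I, f I != 0) (f != 0).
Proof.
apply: (iffP idP) => [nz_f|[I]]; last by apply: contraNneq => ->.
have [//|no_I] := pselect (exists I, f I != 0).
case/negP: nz_f; apply/eqP/funext => I; apply/eqP/contraT => ?.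
by case: no_I; exists I.
Qed.

End PowerSeriesRing.

(** * The graded lexicographic order *)

Fixpoint lexlt (s t : seq nat) : bool :=
  match s, t with
  | x :: s', y :: t' => (x < y)%N || (x == y) && lexlt s' t'
  | _, _ => false
  end.

Fixpoint addseq (s t : seq nat) : seq nat :=
  match s, t with
  | x :: s', y :: t' => (x + y)%N :: addseq s' t'
  | _, _ => [::]
  end.

Lemma lexlt_irr (s : seq nat) : lexlt s s = false.
Proof. by elim: s => //= x s ->; rewrite ltnn eqxx. Qed.

Lemma lexlt_trans (s t u : seq nat) : lexlt s t -> lexlt t u -> lexlt s u.
Proof.
elim: s t u => [|x s IH] [|y t] [|z u] //=.
case/orP=> [xy|/andP[/eqP-> st]]; case/orP=> [yz|/andP[/eqP<- tu]].
- by rewrite (ltn_trans xy yz).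
- by rewrite xy.
- by rewrite yz.
- by rewrite (IH _ _ st tu) eqxx orbT.
Qed.

Lemma lexlt_total (s t : seq nat) : size s = size t -> s != t -> lexlt s t || lexlt t s.
Proof.
elim: s t => [|x s IH] [|y t] //= [size_st] neq_st.
have [//|//|exy] /= := ltngtP x y; apply: IH => //.
by apply: contraNneq neq_st => ->; rewrite exy.
Qed.

Lemma lexlt_addseq (s t u : seq nat) : size s = size u -> size t = size u ->
  lexlt (addseq s u) (addseq t u) = lexlt s t.
Proof.
elim: s t u => [|x s IH] [|y t] [|z u] //= [size_su] [size_tu].
by rewrite ltn_add2r eqn_add2r IH.
Qed.

Lemma addseq_map (T : Type) (f g : T -> nat) (s : seq T) :
  addseq (map f s) (map g s) = map (fun x => f x + g x)%N s.
Proof. by elim: s => //= x s ->. Qed.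

Lemma lexlt_wf m (s : seq nat) : size s = m ->
  Acc (fun a b => size a = m /\ lexlt a b) s.
Proof.
elim: m s => [|m IHm] s size_s.
  by constructor=> t [size_t lt_ts]; exfalso; case: t size_t lt_ts.
case: s size_s => [|x s] size_s; first by case: size_s.
have {}size_s : size s = m by case: size_s.
elim/ltn_ind: x s size_s => x IHx s size_s.
have acc_s := IHm s size_s; elim: acc_s size_s => {}s _ IHs size_s.
constructor=> -[|y t] [size_t]; first by case: size_t.
have {}size_t : size t = m by case: size_t.
case/orP=> [yx|/andP[/eqP-> ts]]; [exact: IHx | exact: IHs].
Qed.

Section GradedLexOrder.
Variable n : nat.
Local Notation M := (mindex n).

Definition mdeg (I : M) := (\sum_i I i)%N.
(* The degree comes first so that only finitely many indices lie below a given one. *)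
Definition mkey (I : M) : seq nat := mdeg I :: [seq I i | i <- enum 'I_n].
Definition mlt (I J : M) := lexlt (mkey I) (mkey J).
Definition mlet (I J : M) := (I == J) || mlt I J.

Lemma size_mkey I : size (mkey I) = n.+1.
Proof. by rewrite /= size_map size_enum_ord. Qed.

Lemma mkey_inj : injective mkey.
Proof. by move=> I J [_ /eq_in_map eqIJ]; apply/ffunP=> i; apply: eqIJ; rewrite mem_enum. Qed.

Lemma mkey_add I J : mkey (madd I J) = addseq (mkey I) (mkey J).
Proof.
rewrite /mkey /= addseq_map /mdeg -big_split /=; congr (_ :: _).
  by apply: eq_bigr => i _; rewrite ffunE.
by apply: eq_map => i; rewrite ffunE.
Qed.

Lemma mdeg_ge (L : M) i : (L i <= mdeg L)%N.
Proof. by rewrite /mdeg (bigD1 i) //= leq_addr. Qed.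

Lemma mltxx I : mlt I I = false.
Proof. exact: lexlt_irr. Qed.

Lemma mlt_trans I J L : mlt I J -> mlt J L -> mlt I L.
Proof. exact: lexlt_trans. Qed.

Lemma mlt_addr I J L : mlt (madd I L) (madd J L) = mlt I J.
Proof. by rewrite /mlt !mkey_add lexlt_addseq // !size_mkey. Qed.

Lemma mlt_addl I J L : mlt (madd L I) (madd L J) = mlt I J.
Proof. by rewrite ![madd L _]maddC mlt_addr. Qed.

Lemma mlt_mdeg I J : mlt I J -> (mdeg I <= mdeg J)%N.
Proof. by case/orP=> [/ltnW|/andP [/eqP -> _]]. Qed.

Lemma mlt_ind (P : M -> Prop) :
  (forall I, (forall J, mlt J I -> P J) -> P I) -> forall I, P I.
Proof.
move=> IH I; have : Acc (fun a b => size a = n.+1 /\ lexlt a b) (mkey I).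
  exact/lexlt_wf/size_mkey.
move Ek : (mkey I) => k acc_k; elim: acc_k I Ek => {}k _ IHk I Ek.
by apply: IH => J JI; apply: (IHk (mkey J) _ J erefl); rewrite size_mkey -Ek.
Qed.

Lemma mlt0 I : mlt I (m0 n) = false.
Proof.
apply/negP => lt_I0; have := mlt_mdeg lt_I0; have -> : mdeg (m0 n) = 0%N.
  by rewrite /mdeg big1 // => i _; rewrite ffunE.
rewrite leqn0 /mdeg sum_nat_eq0 => /forallP I0; move: lt_I0.
suff -> : I = m0 n by rewrite mltxx.
by apply/ffunP=> i; rewrite ffunE; apply/eqP/I0.
Qed.

Lemma mletNgt I J : ~~ mlt J I -> mlet I J.
Proof.
move=> JI; rewrite /mlet; have [//|neqIJ] /= := eqVneq I J.
have neq_key : mkey I != mkey J by apply: contra_neq neqIJ; apply: mkey_inj.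
have size_key : size (mkey I) = size (mkey J) by rewrite !size_mkey.
by case/orP: (lexlt_total size_key neq_key) => // lt_JI; case/negP: JI.
Qed.

Lemma mlet_refl I : mlet I I.
Proof. by rewrite /mlet eqxx. Qed.

Lemma mlet_lt_trans I J L : mlet I J -> mlt J L -> mlt I L.
Proof. by case/orP=> [/eqP->//|]; apply: mlt_trans. Qed.

Lemma mlt_let_trans I J L : mlt I J -> mlet J L -> mlt I L.
Proof. by move=> IJ /orP [/eqP<-//|]; apply: mlt_trans. Qed.

Lemma mlet_trans I J L : mlet I J -> mlet J L -> mlet I L.
Proof. by case/orP=> [/eqP->//|IJ JL]; rewrite /mlet (mlt_let_trans IJ JL) orbT. Qed.

Lemma mlet_add I J I' J' : mlet I I' -> mlet J J' -> mlet (madd I J) (madd I' J').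
Proof.
move=> II' JJ'; apply: (@mlet_trans _ (madd I' J)).
  by case/orP: II' => [/eqP->|lt]; rewrite ?mlet_refl // /mlet mlt_addr lt orbT.
by case/orP: JJ' => [/eqP->|lt]; rewrite ?mlet_refl // /mlet mlt_addl lt orbT.
Qed.

End GradedLexOrder.

(** * Subfields and coefficients in a subfield *)

Section SubfieldClosure.
Variables (K : fieldType) (S : K -> Prop).
Hypothesis subS : is_subfield S.

Lemma subfield0 : S 0. Proof. by case: subS. Qed.
Lemma subfield1 : S 1. Proof. by case: subS. Qed.
Lemma subfieldB x y : S x -> S y -> S (x - y). Proof. by case: subS => _ _ H _ /H h /h []. Qed.
Lemma subfieldM x y : S x -> S y -> S (x * y). Proof. by case: subS => _ _ H _ /H h /h []. Qed.
Lemma subfieldV x : S x -> S x^-1. Proof. by case: subS => _ _ _ H /H. Qed.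

Lemma subfieldN x : S x -> S (- x).
Proof. by rewrite -sub0r; apply/subfieldB/subfield0. Qed.

Lemma subfieldD x y : S x -> S y -> S (x + y).
Proof. by move=> Sx Sy; rewrite -[y]opprK; apply/subfieldB/subfieldN. Qed.

Lemma subfield_div x y : S x -> S y -> S (x / y).
Proof. by move=> Sx Sy; apply/subfieldM/subfieldV. Qed.

Lemma subfieldMn x m : S x -> S (x *+ m).
Proof.
move=> Sx; elim: m => [|m IH]; first by rewrite mulr0n; apply: subfield0.
by rewrite mulrS; apply: subfieldD.
Qed.

Lemma subfieldX x m : S x -> S (x ^+ m).
Proof.
move=> Sx; elim: m => [|m IH]; first by rewrite expr0; apply: subfield1.
by rewrite exprS; apply: subfieldM.
Qed.

Lemma subfield_sum (I : Type) (r : seq I) (P : pred I) (F : I -> K) :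
  (forall i, P i -> S (F i)) -> S (\sum_(i <- r | P i) F i).
Proof. by move=> SF; apply: big_ind => //; [apply: subfield0 | apply: subfieldD]. Qed.

End SubfieldClosure.

Lemma gen_field_subfield (K : fieldType) (F A : K -> Prop) : is_subfield (gen_field F A).
Proof.
split=> [S subS _ _|S subS _ _|x y Fx Fy|x Fx S subS FS AS].
- exact: subfield0.
- exact: subfield1.
- by split=> S subS FS AS; [apply: subfieldB | apply: subfieldM]; by [apply: Fx | apply: Fy].
- by apply: subfieldV => //; apply: Fx.
Qed.

Lemma gen_field_base (K : fieldType) (F A : K -> Prop) x : F x -> gen_field F A x.
Proof. by move=> Fx S _ FS _; apply: FS. Qed.

Lemma gen_field_gen (K : fieldType) (F A : K -> Prop) x : A x -> gen_field F A x.
Proof. by move=> Ax S _ _ AS; apply: AS. Qed.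

Section PowerSeriesSupport.
Variables (K : fieldType) (n : nat).
Local Notation M := (mindex n).
Local Notation PS := (pseries K n).

Definition supp_ge (f : PS) (a : M) := forall L, mlt L a -> f L = 0.

Lemma supp_ge0 (f : PS) : supp_ge f (m0 n).
Proof. by move=> L; rewrite mlt0. Qed.

Lemma supp_geP (f : PS) a L : supp_ge f a -> f L != 0 -> mlet a L.
Proof. by move=> fa fL; apply: mletNgt; apply: contra fL => /fa ->. Qed.

Lemma supp_geM (f g : PS) a b : supp_ge f a -> supp_ge g b -> supp_ge (f * g) (madd a b).
Proof.
move=> fa gb L La; rewrite psME big1_seq // => J /andP [_]; rewrite mem_mdivs => JL.
have [->|fJ] := eqVneq (f J) 0; first by rewrite mul0r.
have [->|gJ] := eqVneq (g (msub L J)) 0; first by rewrite mulr0.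
have := mlet_add (supp_geP fa fJ) (supp_geP gb gJ); rewrite msubKC // => aL.
by have := mlt_let_trans La aL; rewrite mltxx.
Qed.

Lemma supp_geMr (f g : PS) a : supp_ge f a -> supp_ge (f * g) a.
Proof.
move=> fa; have := supp_geM fa (supp_ge0 g); congr supp_ge.
by apply/ffunP=> i; rewrite !ffunE addn0.
Qed.

Lemma psM_lowest (f g : PS) a b : supp_ge f a -> supp_ge g b ->
  (f * g) (madd a b) = f a * g b.
Proof.
move=> fa gb; rewrite psME (bigD1_seq a) ?mem_mdivs ?mle_addr ?mdivs_uniq //= maddK.
rewrite big1_seq ?addr0 // => J /andP [neq_Ja]; rewrite mem_mdivs => J_le.
have [->|fJ] := eqVneq (f J) 0; first by rewrite mul0r.
have [->|gJ] := eqVneq (g (msub (madd a b) J)) 0; first by rewrite mulr0.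
have aJ : mlt a J by case/orP: (supp_geP fa fJ) => [/eqP eq_aJ|//]; rewrite eq_aJ eqxx in neq_Ja.
have le_ab : mlet (madd a b) (madd a (msub (madd a b) J)).
  by apply: mlet_add (mlet_refl _) (supp_geP gb gJ).
have : mlt (madd a (msub (madd a b) J)) (madd J (msub (madd a b) J)) by rewrite mlt_addr.
by rewrite msubKC // => /(mlet_lt_trans le_ab); rewrite mltxx.
Qed.

Lemma ps_min_supp (f : PS) : f != 0 -> exists J, f J != 0 /\ supp_ge f J.
Proof.
case/ps_neq0P => I; elim/(@mlt_ind n): I => I IH fI.
have [[J JI fJ]|no_J] := pselect (exists2 J, mlt J I & f J != 0); first exact: IH JI fJ.
by exists I; split=> // L LI; apply/eqP/contraT => fL; case: no_J; exists L.
Qed.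

Definition ps_over (S : K -> Prop) (f : PS) := forall I, S (f I).

Section PsOver.
Variable S : K -> Prop.
Hypothesis subS : is_subfield S.

Lemma ps_over0 : ps_over S 0. Proof. by move=> I; apply: subfield0. Qed.

Lemma ps_over1 : ps_over S 1.
Proof. by move=> I; rewrite ps1E; case: ifP => _; [apply: subfield1 | apply: subfield0]. Qed.

Lemma ps_overD f g : ps_over S f -> ps_over S g -> ps_over S (f + g).
Proof. by move=> Sf Sg I; apply: subfieldD. Qed.

Lemma ps_overN f : ps_over S f -> ps_over S (- f).
Proof. by move=> Sf I; apply: subfieldN. Qed.

Lemma ps_overM f g : ps_over S f -> ps_over S g -> ps_over S (f * g).
Proof. by move=> Sf Sg I; rewrite psME; apply: subfield_sum => // J _; apply: subfieldM. Qed.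

Lemma ps_overMn f m : ps_over S f -> ps_over S (f *+ m).
Proof. by move=> Sf I; rewrite psMnE; apply: subfieldMn. Qed.

Lemma ps_overX f m : ps_over S f -> ps_over S (f ^+ m).
Proof. by move=> Sf; elim: m => [|m IH]; [apply: ps_over1 | rewrite exprS; apply: ps_overM]. Qed.

Lemma ps_over_sum (I : Type) (r : seq I) (P : pred I) (F : I -> PS) :
  (forall i, P i -> ps_over S (F i)) -> ps_over S (\sum_(i <- r | P i) F i).
Proof. by move=> SF; apply: big_ind => //; [apply: ps_over0 | apply: ps_overD]. Qed.

Lemma ps_over_horner (p : {poly PS}) x :
  (forall i, ps_over S p`_i) -> ps_over S x -> ps_over S p.[x].
Proof.
move=> Sp Sx; rewrite horner_coef; apply: ps_over_sum => i _.
by apply: ps_overM => //; apply: ps_overX.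
Qed.

End PsOver.

Lemma ps_over_sub (S1 S2 : K -> Prop) (f : PS) :
  (forall x, S1 x -> S2 x) -> ps_over S1 f -> ps_over S2 f.
Proof. by move=> S12 S1f I; apply: S12. Qed.

Definition psC (c : K) : PS := fun I => if I == m0 n then c else 0.

Lemma psCM c (f : PS) I : (psC c * f) I = c * f I.
Proof.
rewrite psME (bigD1_seq (m0 n)) ?mem_mdivs ?mle0m ?mdivs_uniq //= /psC eqxx msubm0.
by rewrite big1 ?addr0 // => J /negbTE ->; rewrite mul0r.
Qed.

Definition psmono (L : M) (c : K) : PS := fun J => if J == L then c else 0.
Definition mscale (m : nat) (L : M) : M := [ffun i => (m * L i)%N].

Lemma psmonoM L1 L2 c1 c2 : psmono L1 c1 * psmono L2 c2 = psmono (madd L1 L2) (c1 * c2).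
Proof.
apply: funext => J; rewrite psME /psmono.
have [L1J|L1J] := boolP (mle L1 J); last first.
  rewrite big1_seq; last first.
    move=> J' /andP [_]; rewrite mem_mdivs => J'J.
    by case: eqP => [eqJ'|_]; [rewrite -eqJ' J'J in L1J | rewrite mul0r].
  by case: eqP => // eqJ; rewrite eqJ mle_addr in L1J.
rewrite (bigD1_seq L1) ?mem_mdivs ?mdivs_uniq //= eqxx big1_seq ?addr0; last first.
  by move=> J' /andP [/negbTE -> _]; rewrite mul0r.
have [->|neqJ] := eqVneq J (madd L1 L2); first by rewrite maddK eqxx.
case: eqP => [eqL2|_]; last by rewrite mulr0.
by case/negP: neqJ; rewrite -eqL2 msubKC.
Qed.

Lemma psmonoX L c m : psmono L c ^+ m = psmono (mscale m L) (c ^+ m).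
Proof.
elim: m => [|m IH].
  have -> : mscale 0 L = m0 n by apply/ffunP => i; rewrite !ffunE.
  by rewrite !expr0; apply: funext => J; rewrite ps1E /psmono.
rewrite exprS IH psmonoM exprS; congr psmono.
by apply/ffunP => i; rewrite !ffunE mulSn.
Qed.

Lemma mscale_inj m : (0 < m)%N -> injective (mscale m).
Proof.
move=> m_gt0 I J /ffunP eqIJ; apply/ffunP => i; have := eqIJ i; rewrite !ffunE.
by move/eqP; rewrite eqn_mul2l eqn0Ngt m_gt0 => /eqP.
Qed.

Lemma psM_eq_le N (f f' g g' : PS) :
  (forall L, mle L N -> f L = f' L) -> (forall L, mle L N -> g L = g' L) ->
  forall L, mle L N -> (f * g) L = (f' * g') L.
Proof.
move=> ff' gg' L LN; rewrite !psME; apply: eq_big_seq => J; rewrite mem_mdivs => JL.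
by rewrite ff' ?gg' //; apply: mle_trans LN; rewrite ?mle_subr.
Qed.

Lemma psX_eq_le N (f g : PS) m : (forall L, mle L N -> f L = g L) ->
  forall L, mle L N -> (f ^+ m) L = (g ^+ m) L.
Proof.
by move=> fg; elim: m => [|m IH] L LN; rewrite ?expr0 // !exprS (psM_eq_le fg IH).
Qed.

(* Only the finitely many coefficients of s below [p * I] matter, so s may be
   replaced by a polynomial, to which the Frobenius morphism applies termwise. *)
Lemma ps_frobeniusE (p : nat) (s : PS) I : p \in [pchar K] ->
  (s ^+ p) (mscale p I) = s I ^+ p.
Proof.
move=> pcharK; have p_gt0 : (0 < p)%N by rewrite prime_gt0 // (pcharf_prime pcharK).
have pcharPS : p \in [pchar PS].
  rewrite inE (pcharf_prime pcharK) /=; apply/eqP/funext => J.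
  by rewrite psMnE ps0E ps1E; case: ifP => _; rewrite ?mul0rn // (pcharf0 pcharK).
pose N := mscale p I; pose T : PS := \sum_(L <- mdivs N) psmono L (s L).
have sT L : mle L N -> s L = T L.
  move=> LN; rewrite /T ps_sumE (bigD1_seq L) ?mem_mdivs ?mdivs_uniq //= /psmono eqxx.
  by rewrite big1_seq ?addr0 // => J /andP [/negbTE JL _]; rewrite eq_sym JL.
rewrite (psX_eq_le p sT (mle_refl N)) -(pFrobenius_autE pcharPS) rmorph_sum ps_sumE.
rewrite (bigD1_seq I) ?mem_mdivs ?mdivs_uniq //=; last first.
  by apply/mleP => i; rewrite ffunE leq_pmull.
rewrite pFrobenius_autE psmonoX /psmono eqxx big1_seq ?addr0 // => J /andP [JI _].
rewrite pFrobenius_autE psmonoX /psmono; case: eqP => // /(mscale_inj p_gt0) eqJI.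
by rewrite eqJI eqxx in JI.
Qed.

End PowerSeriesSupport.

(** * Finite algebraic extensions *)

Section Span.
Variables (K : fieldType) (k : K -> Prop).
Hypothesis subk : is_subfield k.

Definition kspan (u : seq K) (x : K) :=
  exists2 c : nat -> K, (forall i, k (c i)) & x = \sum_(i < size u) c i * u`_i.

Lemma kspan0 u : kspan u 0.
Proof.
by exists (fun _ => 0) => [i|]; [apply: subfield0 | rewrite big1 // => i _; rewrite mul0r].
Qed.

Lemma kspanD u x y : kspan u x -> kspan u y -> kspan u (x + y).
Proof.
move=> [c1 kc1 ->] [c2 kc2 ->]; exists (fun i => c1 i + c2 i) => [i|]; first exact: subfieldD.
by rewrite -big_split; apply: eq_bigr => i _; rewrite mulrDl.
Qed.

Lemma kspanZ u a x : k a -> kspan u x -> kspan u (a * x).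
Proof.
move=> ka [c kc ->]; exists (fun i => a * c i) => [i|]; first exact: subfieldM.
by rewrite mulr_sumr; apply: eq_bigr => i _; rewrite mulrA.
Qed.

Lemma kspanB u x y : kspan u x -> kspan u y -> kspan u (x - y).
Proof.
move=> ux uy; apply: kspanD => //; rewrite -mulN1r; apply: kspanZ => //.
by apply: subfieldN => //; apply: subfield1.
Qed.

Lemma kspan_sum u (I : Type) (r : seq I) (P : pred I) (F : I -> K) :
  (forall i, P i -> kspan u (F i)) -> kspan u (\sum_(i <- r | P i) F i).
Proof. by move=> uF; apply: big_ind => //; [apply: kspan0 | apply: kspanD]. Qed.

Lemma kspan_mem u y : y \in u -> kspan u y.
Proof.
move=> uy; pose i := index y u; have lt_i : (i < size u)%N by rewrite index_mem.
exists (fun j => if j == i then 1 else 0) => [j|].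
  by case: ifP => _; [apply: subfield1 | apply: subfield0].
rewrite (bigD1 (Ordinal lt_i)) //= eqxx mul1r nth_index // big1 ?addr0 // => j neq_ji.
by rewrite ifN ?mul0r //; apply: contra neq_ji => /eqP eq_ji; apply/eqP/val_inj.
Qed.

Lemma kspan_trans u v x : (forall y, y \in u -> kspan v y) -> kspan u x -> kspan v x.
Proof.
move=> uv [c kc ->]; apply: kspan_sum => i _; apply: kspanZ => //.
exact/uv/mem_nth.
Qed.

Lemma kspan_mulr u w b x :
  (forall y, y \in u -> kspan w (y * b)) -> kspan u x -> kspan w (x * b).
Proof.
move=> uw [c kc ->]; rewrite mulr_suml; apply: kspan_sum => i _; rewrite -mulrA.
by apply: kspanZ => //; apply/uw/mem_nth.
Qed.

Lemma kspan_cons u y x : kspan u x -> kspan (y :: u) x.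
Proof. by apply: kspan_trans => z uz; apply: kspan_mem; rewrite in_cons uz orbT. Qed.

Lemma kspan_consE y u x : kspan (y :: u) x ->
  exists2 c, k c & kspan u (x - c * y).
Proof.
move=> [c kc ->]; exists (c 0%N) => //.
by rewrite big_ord_recl /= addrAC subrr add0r; exists (fun i => c i.+1).
Qed.

Lemma kspan_nth_neq0 u x : x != 0 -> kspan u x -> exists2 t, (t < size u)%N & u`_t != 0.
Proof.
move=> x_neq0 [c _ xE]; have [//|u_eq0] := pselect (exists2 t, (t < size u)%N & u`_t != 0).
case/eqP: x_neq0; rewrite xE big1 // => i _.
by have [->|?] := eqVneq u`_i 0; [rewrite mulr0 | case: u_eq0; exists i].
Qed.

Lemma kspan_nil x : kspan [::] x -> x = 0.
Proof. by case=> c _ ->; rewrite big_ord0. Qed.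

Lemma kspan_basis_in (u : seq K) (W : K -> Prop) :
  W 0 -> (forall x y, W x -> W y -> W (x - y)) ->
  (forall a x, k a -> W x -> W (a * x)) -> (forall x, W x -> kspan u x) ->
  exists w, (forall y, y \in w -> W y) /\ forall x, W x -> kspan w x.
Proof.
elim: u W => [|u0 u IH] W W0 WB WZ Wu.
  by exists [::]; split=> // x /Wu /kspan_nil ->; apply: kspan0.
have [Wu'|] := pselect (forall x, W x -> kspan u x); first exact: IH.
move=> /existsNP [x0 /not_implyP [Wx0 ux0]].
have [c0 kc0 u_x0] := kspan_consE (Wu _ Wx0).
have c0_neq0 : c0 != 0.
  by apply: contra_notN ux0 => /eqP c0_eq0; rewrite c0_eq0 mul0r subr0 in u_x0.
(* x0 eliminates u0: W is spanned by x0 together with W' = W /\ span u. *)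
pose W' y := W y /\ kspan u y.
have [w [Ww' w_span]] : exists w, (forall y, y \in w -> W' y) /\ forall x, W' x -> kspan w x.
  apply: IH => [|x y [Wx ux] [Wy uy]|a x ka [Wx ux]|x []] //.
  - by split=> //; apply: kspan0.
  - by split; [apply: WB | apply: kspanB].
  - by split; [apply: WZ | apply: kspanZ].
exists (x0 :: w); split=> [y|y Wy].
  by rewrite in_cons => /orP [/eqP ->|/Ww' []].
have [d0 kd0 u_y] := kspan_consE (Wu _ Wy); pose a := d0 / c0.
have ka : k a by apply: subfield_div.
have W'y : W' (y - a * x0).
  split; first by apply: WB => //; apply: WZ.
  have -> : y - a * x0 = (y - d0 * u0) - a * (x0 - c0 * u0).
    by rewrite /a mulrBr mulrA divfK // opprB addrA subrK.
  by apply: kspanB => //; apply: kspanZ.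
rewrite -(subrK (a * x0) y); apply: kspanD => //.
  by apply: kspan_cons => //; apply: w_span.
by apply: kspanZ => //; apply: kspan_mem; rewrite ?mem_head.
Qed.

End Span.

Lemma take_poly1 (R : nzRingType) (q : {poly R}) : take_poly 1 q = (q`_0)%:P.
Proof. by apply/polyP => i; rewrite coef_take_poly coefC; case: i. Qed.

Section AlgebraicExtension.
Variables (K : fieldType) (k : K -> Prop).
Hypothesis subk : is_subfield k.

Lemma inv_root_poly x (q : {poly K}) : x != 0 -> q != 0 -> (forall i, k q`_i) ->
  root q x -> exists2 r : {poly K}, (forall i, k r`_i) & x^-1 = r.[x].
Proof.
move=> x_neq0; move sq : (size q) => m.
elim/ltn_ind: m q sq => m IH q sq q_neq0 kq /rootP qx.
have eq_q := poly_take_drop 1 q; set q1 := drop_poly 1 q in eq_q.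
have kq1 i : k q1`_i by rewrite coef_drop_poly.
have q1x : q`_0 + q1.[x] * x = 0.
  by have := congr1 (horner^~ x) eq_q; rewrite hornerD hornerMX take_poly1 hornerC qx.
have [q0_eq0|q0_neq0] := eqVneq q`_0 0.
  have q1x0 : root q1 x.
    by move: q1x; rewrite q0_eq0 add0r => /eqP; rewrite mulf_eq0 (negbTE x_neq0) orbF.
  apply: (IH (size q1)) q1x0 => //.
    by rewrite -sq size_drop_poly subn1 ltn_predL size_poly_gt0.
  by apply: contraNneq q_neq0 => q1_eq0; rewrite -eq_q q1_eq0 take_poly1 q0_eq0 mul0r addr0.
exists (- (q`_0)^-1 *: q1) => [i|]; rewrite ?coefZ.
  by apply: subfieldM => //; apply: subfieldN => //; apply: subfieldV.
have q1xE : q1.[x] * x = - q`_0 by apply/eqP; rewrite -addr_eq0 addrC q1x.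
apply: (mulfI x_neq0); rewrite divff // hornerZ mulrCA [x * _]mulrC q1xE.
by rewrite mulNr mulrN opprK mulVf.
Qed.

Hypothesis alg_k : forall x : K, algebraic_over k x.

Section AdjoinRoot.
Variables (V : K -> Prop) (u : seq K) (q : {poly K}) (b : K).
Hypotheses (subV : is_subfield V) (kV : forall x, k x -> V x).
Hypotheses (monic_q : q \is monic) (kq : forall i, k q`_i) (qb : root q b).
Hypothesis finV : forall x, V x -> kspan k u x.

Local Notation d := (size q).-1.

(* V(b) = V[b] is spanned over V by 1, b, ..., b^(d-1). *)
Definition adjoin_root (x : K) :=
  exists2 v : nat -> K, (forall e, V (v e)) & x = \sum_(e < d) v e * b ^+ e.

Lemma adjoin_root_deg_gt0 : (0 < d)%N.
Proof. by rewrite -subn1 subn_gt0 (root_size_gt1 (monic_neq0 monic_q) qb). Qed.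

Lemma root_pow_deg : b ^+ d = - \sum_(e < d) q`_e * b ^+ e.
Proof.
have sq : size q = d.+1 by rewrite prednK // size_poly_gt0 monic_neq0.
have lcq : q`_d = 1 by rewrite -lead_coefE; apply/monicP.
move/rootP: qb; rewrite horner_coef sq big_ord_recr /= lcq mul1r => /eqP.
by rewrite addrC addr_eq0 => /eqP.
Qed.

Lemma adjoin_root_base x : V x -> adjoin_root x.
Proof.
move=> Vx; exists (fun e => if e == 0%N then x else 0) => [e|].
  by case: ifP => _ //; apply: subfield0.
rewrite -(prednK adjoin_root_deg_gt0) big_ord_recl /= expr0 mulr1 big1 ?addr0 //.
by move=> i _; rewrite mul0r.
Qed.

Lemma adjoin_rootB x y : adjoin_root x -> adjoin_root y -> adjoin_root (x - y).
Proof.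
move=> [v1 Vv1 ->] [v2 Vv2 ->]; exists (fun e => v1 e - v2 e) => [e|].
  exact: subfieldB.
by rewrite -sumrB; apply: eq_bigr => i _; rewrite mulrBl.
Qed.

Lemma adjoin_rootZ a x : V a -> adjoin_root x -> adjoin_root (a * x).
Proof.
move=> Va [v Vv ->]; exists (fun e => a * v e) => [e|]; first exact: subfieldM.
by rewrite mulr_sumr; apply: eq_bigr => i _; rewrite mulrA.
Qed.

Lemma adjoin_root0 : adjoin_root 0.
Proof. by apply: adjoin_root_base; apply: subfield0. Qed.

Lemma adjoin_rootD x y : adjoin_root x -> adjoin_root y -> adjoin_root (x + y).
Proof.
move=> Ax Ay; have -> : x + y = x - (0 - y) by rewrite sub0r opprK.
by do !apply: adjoin_rootB => //; apply: adjoin_root0.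
Qed.

Lemma adjoin_root_sum (I : Type) (r : seq I) (P : pred I) (F : I -> K) :
  (forall i, P i -> adjoin_root (F i)) -> adjoin_root (\sum_(i <- r | P i) F i).
Proof. by move=> AF; apply: big_ind => //; [apply: adjoin_root0 | apply: adjoin_rootD]. Qed.

(* Multiplication by b shifts the coefficients, the top one being reduced
   through [root_pow_deg]. *)
Lemma adjoin_root_mulb x : adjoin_root x -> adjoin_root (b * x).
Proof.
have [d' dE] : exists d', d = d'.+1 by exists d.-1; rewrite prednK ?adjoin_root_deg_gt0.
move=> [v Vv ->]; pose shift e := if e is e'.+1 then v e' else 0.
exists (fun e => shift e - v d' * q`_e) => [e|].
  apply: subfieldB => //; last by apply: subfieldM => //; apply: kV.
  by case: e => [|e] //=; apply: subfield0.
rewrite mulr_sumr dE big_ord_recr /= mulrCA -exprS -dE root_pow_deg dE.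
rewrite mulrN [RHS](eq_bigr (fun e : 'I_d'.+1 => shift e * b ^+ e - v d' * q`_e * b ^+ e));
  last by move=> e _; rewrite mulrBl.
rewrite sumrB [X in _ = X - _]big_ord_recl /shift /= mul0r add0r mulr_sumr; congr (_ - _).
  by apply: eq_bigr => i _; rewrite mulrCA -exprS.
by apply: eq_bigr => e _; rewrite mulrA.
Qed.

Lemma adjoin_rootM x y : adjoin_root x -> adjoin_root y -> adjoin_root (x * y).
Proof.
have mulbX z e : adjoin_root z -> adjoin_root (z * b ^+ e).
  by move=> Az; elim: e => [|e IH]; rewrite ?expr0 ?mulr1 // exprS mulrCA; apply: adjoin_root_mulb.
move=> Ax [v Vv ->]; rewrite mulr_sumr; apply: adjoin_root_sum => i _.
by rewrite mulrCA; apply: adjoin_rootZ => //; apply: mulbX.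
Qed.

Lemma adjoin_root_subfield : is_subfield adjoin_root.
Proof.
have A1 : adjoin_root 1 by apply: adjoin_root_base; apply: subfield1.
split=> [||x y Ax Ay|x Ax]; [exact: adjoin_root0 | exact: A1 | |].
  by split; [apply: adjoin_rootB | apply: adjoin_rootM].
have [->|x_neq0] := eqVneq x 0; first by rewrite invr0; apply: adjoin_root0.
have [r r_neq0 [kr rx]] := alg_k x.
have [r' kr' ->] := inv_root_poly x_neq0 r_neq0 kr rx.
have AX e : adjoin_root (x ^+ e).
  by elim: e => [|e IH]; rewrite ?expr0 // exprS; apply: adjoin_rootM.
by rewrite horner_coef; apply: adjoin_root_sum => i _; apply: adjoin_rootZ; first exact: kV.
Qed.

Lemma adjoin_root_root : adjoin_root b.
Proof.
by rewrite -[b]mulr1; apply: adjoin_root_mulb; apply: adjoin_root_base; apply: subfield1.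
Qed.

Lemma adjoin_root_finite x :
  adjoin_root x -> kspan k [seq y * b ^+ e | e <- iota 0 d, y <- u] x.
Proof.
move=> [v Vv ->]; apply: kspan_sum => // e _; apply: (kspan_mulr subk (u := u)); last exact: finV.
move=> y uy; apply: kspan_mem => //; apply: (allpairs_f (fun e y => y * b ^+ e)) => //.
by rewrite mem_iota /= add0n.
Qed.

End AdjoinRoot.

Lemma algebraic_monic x : algebraic_over k x ->
  exists q : {poly K}, [/\ q \is monic, forall i, k q`_i & root q x].
Proof.
move=> [q q_neq0 [kq qx]]; exists ((lead_coef q)^-1 *: q); split.
- by apply/monicP; rewrite lead_coefZ mulVf ?lead_coef_eq0.
- by move=> i; rewrite coefZ; apply: subfieldM => //; apply: subfieldV => //; apply: kq.
- by rewrite rootZ ?invr_eq0 ?lead_coef_eq0.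
Qed.

Lemma finite_subfield_adjoin (V : K -> Prop) (u : seq K) (b : K) :
  is_subfield V -> (forall x, k x -> V x) -> (forall x, V x -> kspan k u x) ->
  exists W : K -> Prop, [/\ is_subfield W, (forall x, V x -> W x), W b
     & exists w, forall x, W x -> kspan k w x].
Proof.
move=> subV kV finV; have [q [monic_q kq qb]] := algebraic_monic (alg_k b).
exists (adjoin_root V q b); split.
- by apply: adjoin_root_subfield.
- by move=> x Vx; apply: adjoin_root_base.
- by apply: adjoin_root_root.
- by exists [seq y * b ^+ e | e <- iota 0 (size q).-1, y <- u] => x; apply: adjoin_root_finite.
Qed.

Lemma finite_subfield_seq (s : seq K) :
  exists V : K -> Prop, [/\ is_subfield V, (forall x, k x -> V x),
     (forall y, y \in s -> V y) & exists u, forall x, V x -> kspan k u x].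
Proof.
elim: s => [|b s [V [subV kV sV [u finV]]]].
  exists k; split => //; exists [:: 1] => x kx; exists (fun _ => x) => //.
  by rewrite big_ord1 mulr1.
have [W [subW VW Wb [w finW]]] := finite_subfield_adjoin b subV kV finV.
exists W; split=> [||y|]; last by exists w.
- exact: subW.
- by move=> x /kV /VW.
- by rewrite in_cons => /orP [/eqP ->|/sV /VW].
Qed.

End AlgebraicExtension.

(** * The separable case *)

Lemma horner_taylor2 (R : comNzRingType) (p : {poly R}) x h :
  exists r, p.[x + h] = p.[x] + h * p^`().[x] + h ^+ 2 * r.
Proof.
elim/poly_ind: p => [|p c [r IH]]; first by exists 0; rewrite deriv0 !horner0; ring.
exists (p^`().[x] + r * (x + h)).
by rewrite derivMXaddC !(hornerD, hornerMX, hornerC) IH; ring.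
Qed.

Lemma horner_taylor1 (R : comNzRingType) (p : {poly R}) x h :
  exists r, p.[x + h] = p.[x] + h * r.
Proof. by have [r ->] := horner_taylor2 p x h; exists (p^`().[x] + h * r); ring. Qed.

Section SeparableRoot.
Variables (K : fieldType) (n : nat) (k : K -> Prop).
Local Notation M := (mindex n).
Local Notation PS := (pseries K n).
Hypothesis subk : is_subfield k.

Variables (s : PS) (P : {poly PS}) (J0 : M).
Hypotheses (kP : forall j, ps_over k P`_j) (Ps : P.[s] = 0).
Hypotheses (P's_J0 : P^`().[s] J0 != 0) (P's_ge : supp_ge P^`().[s] J0).

Definition ps_trunc (I : M) (f : PS) : PS := fun L => if mlt L I then f L else 0.

(* Taylor expansion of P at the truncation of s below I: the coefficient of
   index I + J0 of P(s) = 0 is linear in s I, with slope P'(s) J0. *)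
Lemma separable_coef I : mlt J0 I ->
  P^`().[s] J0 = P^`().[ps_trunc I s] J0 /\
  s I * P^`().[s] J0 = - P.[ps_trunc I s] (madd I J0).
Proof.
move=> J0I; set A := ps_trunc I s; pose B := s - A.
have B_ge : supp_ge B I by move=> L LI; rewrite /B psBE /A /ps_trunc LI subrr.
have BI : B I = s I by rewrite /B psBE /A /ps_trunc mltxx subr0.
have s_AB : A + B = s by rewrite addrC subrK.
have [r Pr] := horner_taylor2 P A B; have [r' P'r] := horner_taylor1 P^`() A B.
rewrite s_AB in Pr P'r; have BB_ge : supp_ge (B * B) (madd I I) by apply: supp_geM.
have B2_ge : supp_ge (B ^+ 2) (madd I I) by rewrite expr2.
split; first by rewrite P'r psDE (supp_geMr r' B_ge J0I) addr0.
apply/eqP; rewrite -addr_eq0 addrC; apply/eqP.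
have := congr1 (fun f : PS => f (madd I J0)) Pr; rewrite Ps ps0E => ->.
have -> : P^`().[A] = P^`().[s] - B * r' by rewrite P'r addrK.
rewrite !psDE mulrBr psBE (psM_lowest B_ge P's_ge) BI mulrA -expr2.
by rewrite (supp_geMr _ BB_ge) ?(supp_geMr _ B2_ge) ?mlt_addl // subr0 addr0.
Qed.

Lemma separable_coefs_in (V : K -> Prop) : is_subfield V -> (forall x, k x -> V x) ->
  (forall L, mlet L J0 -> V (s L)) -> forall I, V (s I).
Proof.
move=> subV kV Vs_le I; elim/(@mlt_ind n): I => I IH.
have [/Vs_le //|IJ0] := boolP (mlet I J0).
have J0I : mlt J0 I by apply: contraNT IJ0 => /mletNgt.
have [P's_eq sIE] := separable_coef J0I.
have V_tr : ps_over V (ps_trunc I s).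
  by move=> L; rewrite /ps_trunc; case: ifP => LI; [apply: IH | apply: subfield0].
have VP j : ps_over V P`_j by apply: ps_over_sub (kP j).
have VP' j : ps_over V P^`()`_j by rewrite coef_deriv; apply: ps_overMn.
have -> : s I = - P.[ps_trunc I s] (madd I J0) / P^`().[s] J0.
  by apply: (mulIf P's_J0); rewrite divfK.
apply: subfield_div => //; last by rewrite P's_eq; apply: ps_over_horner.
by apply: subfieldN => //; apply: ps_over_horner.
Qed.
Hypothesis alg_k : forall x : K, algebraic_over k x.

Lemma separable_finite : finite_degree k (gen_field k (fun y => exists I, y = s I)).
Proof.
have [V [subV kV Vs [u finV]]] :=
  finite_subfield_seq subk alg_k [seq s L | L <- mbox n (mdeg J0).+1].
have Vs_all : forall I, V (s I).
  apply: separable_coefs_in => // L LJ0; apply/Vs/map_f; rewrite mem_mbox.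
  apply/forallP => i; rewrite ltnS (leq_trans (mdeg_ge L i)) //.
  by case/orP: LJ0 => [/eqP ->//|/mlt_mdeg].
by exists u => x Lx; apply: finV; apply: Lx => // y [I ->].
Qed.

End SeparableRoot.

(** * The inseparable case *)

Section Frobenius.
Variables (K : closedFieldType) (p : nat) (k : K -> Prop).
Hypotheses (pcharK : p \in [pchar K]) (subk : is_subfield k).

Lemma pchar_gt0 : (0 < p)%N.
Proof. by rewrite prime_gt0 // (pcharf_prime pcharK). Qed.

Lemma pchar_expB (x y : K) : (x - y) ^+ p = x ^+ p - y ^+ p.
Proof. exact: (rmorphB (pFrobenius_aut pcharK)). Qed.

Lemma pchar_exp_sum (I : Type) (r : seq I) (P : pred I) (F : I -> K) :
  (\sum_(i <- r | P i) F i) ^+ p = \sum_(i <- r | P i) F i ^+ p.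
Proof. exact: (rmorph_sum (pFrobenius_aut pcharK)). Qed.

Lemma pchar_exp_inj (x y : K) : x ^+ p = y ^+ p -> x = y.
Proof. exact: (fmorph_inj (pFrobenius_aut pcharK)). Qed.

Lemma pth_root_exists : exists r : K -> K, forall c, r c ^+ p = c.
Proof.
suff root_c c : exists y : K, y ^+ p = c by have [r rE] := choice root_c; exists r.
have /closed_rootP [y] : size ('X^p - c%:P : {poly K}) != 1%N.
  by rewrite size_XnsubC ?pchar_gt0 // eqSS -lt0n pchar_gt0.
by rewrite /root !hornerE subr_eq0 => /eqP; exists y.
Qed.

Lemma frobenius_image_subfield (V : K -> Prop) : is_subfield V ->
  is_subfield (fun c => exists2 y, V y & y ^+ p = c).
Proof.
move=> subV; split=> [||_ _ [x Vx <-] [y Vy <-]|_ [x Vx <-]].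
- by exists 0; [apply: subfield0 | rewrite expr0n eqn0Ngt pchar_gt0].
- by exists 1; [apply: subfield1 | rewrite expr1n].
- split; first by exists (x - y); [apply: subfieldB | rewrite pchar_expB].
  by exists (x * y); [apply: subfieldM | rewrite exprMn].
- by exists x^-1; [apply: subfieldV | rewrite exprVn].
Qed.

Hypotheses (fgk : fg_over_perfect k) (alg_k : forall x : K, algebraic_over k x).

(* k^(1/p) is finite over k: adjoin to k the p-th roots of its finitely many
   generators over the perfect field F0. *)
Lemma pth_roots_finite :
  exists v : seq K, forall c, k c -> exists y, kspan k v y /\ y ^+ p = c.
Proof.
have [F0 [subF0 perfF0 F0k [s ks]]] := fgk; have [r rE] := pth_root_exists.
have [V [subV kV sV [v finV]]] := finite_subfield_seq subk alg_k [seq r x | x <- s].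
exists v => c /ks kc.
have [y Vy <-] : exists2 y, V y & y ^+ p = c.
  apply: (kc (fun c => exists2 y, V y & y ^+ p = c)); first exact: frobenius_image_subfield.
    by move=> x /(perfF0 p pcharK) [z F0z <-]; exists z => //; apply/kV/F0k.
  by move=> x sx; exists (r x); rewrite ?rE //; apply/sV/map_f.
by exists y; split=> //; apply: finV.
Qed.

Lemma finite_degree_frobenius (n : nat) (s : pseries K n) :
  finite_degree k (gen_field k (fun y => exists I, y = (s ^+ p) I)) ->
  finite_degree k (gen_field k (fun y => exists I, y = s I)).
Proof.
set L := gen_field k _ => -[u finL]; have [v vE] := pth_roots_finite.
have [r rE] := pth_root_exists.
pose W x := L (x ^+ p); have subL : is_subfield L := gen_field_subfield k _.
have subW : is_subfield W.
  rewrite /W; split=> [||x y Lx Ly|x Lx].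
  - by rewrite expr0n eqn0Ngt pchar_gt0; apply: (subfield0 subL).
  - by rewrite expr1n; apply: (subfield1 subL).
  - by rewrite pchar_expB exprMn; split; [apply: (subfieldB subL) | apply: (subfieldM subL)].
  - by rewrite exprVn; apply: (subfieldV subL).
have sW x : gen_field k (fun y => exists I, y = s I) x -> W x.
  apply; first exact: subW.
    by move=> c kc; apply: gen_field_base; apply: subfieldX.
  move=> _ [I ->]; rewrite /W -ps_frobeniusE //.
  by apply: gen_field_gen; exists (mscale p I).
exists [seq y * r z | y <- v, z <- u] => x /sW /finL [c kc xpE].
have [y vy yE] : exists2 y : nat -> K, (forall i, kspan k v (y i)) & forall i, y i ^+ p = c i.
  by have [y yE] := choice (fun i => vE (c i) (kc i)); exists y => i; case: (yE i).
have -> : x = \sum_(i < size u) y i * r u`_i.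
  apply: pchar_exp_inj; rewrite pchar_exp_sum xpE.
  by apply: eq_bigr => i _; rewrite exprMn yE rE.
apply: kspan_sum => // i _; apply: (kspan_mulr subk (u := v)) => // y' vy'.
by apply: kspan_mem => //; apply: (allpairs_f (fun y z => y * r z)) => //; apply: mem_nth.
Qed.

End Frobenius.

(** * Finite degree implies algebraic *)

Section PolyOver.
Variables (R : comNzRingType) (S : R -> Prop).
Hypotheses (S0 : S 0) (S1 : S 1) (SN : forall x, S x -> S (- x)).
Hypotheses (SD : forall x y, S x -> S y -> S (x + y)) (SM : forall x y, S x -> S y -> S (x * y)).

Definition poly_over (P : {poly R}) := forall i, S P`_i.

Lemma poly_overC c : S c -> poly_over c%:P.
Proof. by move=> Sc i; rewrite coefC; case: ifP. Qed.

Lemma poly_over1 : poly_over 1. Proof. exact: poly_overC. Qed.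

Lemma poly_overX : poly_over 'X.
Proof. by move=> i; rewrite coefX; case: (i == 1)%N. Qed.

Lemma poly_overN P : poly_over P -> poly_over (- P).
Proof. by move=> SP i; rewrite coefN; apply: SN. Qed.

Lemma poly_overD P Q : poly_over P -> poly_over Q -> poly_over (P + Q).
Proof. by move=> SP SQ i; rewrite coefD; apply: SD. Qed.

Lemma poly_over_sum (I : Type) (r : seq I) (Pr : pred I) (F : I -> {poly R}) :
  (forall i, Pr i -> poly_over (F i)) -> poly_over (\sum_(i <- r | Pr i) F i).
Proof.
by move=> SF; apply: big_ind => //; [apply: poly_overC | apply: poly_overD].
Qed.

Lemma poly_overM P Q : poly_over P -> poly_over Q -> poly_over (P * Q).
Proof.
by move=> SP SQ i; rewrite coefM; apply: big_ind => // j _; apply: SM.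
Qed.

Lemma poly_over_prod (I : Type) (r : seq I) (Pr : pred I) (F : I -> {poly R}) :
  (forall i, Pr i -> poly_over (F i)) -> poly_over (\prod_(i <- r | Pr i) F i).
Proof. by move=> SF; apply: big_ind => //; [apply: poly_over1 | apply: poly_overM]. Qed.

Lemma poly_over_char_poly m (A : 'M[R]_m) : (forall i j, S (A i j)) -> poly_over (char_poly A).
Proof.
move=> SA; apply: poly_over_sum => sg _; apply: poly_overM.
  case: (perm.odd_perm sg); rewrite ?expr1 ?expr0; last exact: poly_over1.
  by apply: poly_overN; apply: poly_over1.
apply: poly_over_prod => i _; rewrite !mxE; apply: poly_overD.
  by case: (_ == _); rewrite ?mulr1n ?mulr0n; [apply: poly_overX | apply: poly_overC].
by apply: poly_overN; apply: poly_overC.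
Qed.

End PolyOver.

Lemma horner_char_poly_eq0 (R : comNzRingType) m (A : 'M[R]_m) (v : 'rV[R]_m) s t :
  v *m (s%:M - A) = 0 -> GRing.lreg (v 0 t) -> (char_poly A).[s] = 0.
Proof.
move=> vA reg_vt; have -> : (char_poly A).[s] = \det (s%:M - A).
  rewrite -horner_evalE -det_map_mx; congr (\det _); apply/matrixP => i j.
  by rewrite !mxE /= horner_evalE hornerD hornerN hornerMn hornerX hornerC.
apply: reg_vt; rewrite mulr0; have := congr1 (mulmx^~ (\adj (s%:M - A))) vA.
by rewrite -mulmxA mul_mx_adj mul0mx mul_mx_scalar => /rowP /(_ t); rewrite !mxE mulrC.
Qed.



Section FiniteImpliesAlgebraic.
Variables (K : fieldType) (n : nat) (k : K -> Prop).
Local Notation M := (mindex n).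
Local Notation PS := (pseries K n).
Hypothesis subk : is_subfield k.

Lemma ps_algebraicP (s : PS) : ps_algebraic k s <->
  exists P : {poly PS}, [/\ P != 0, poly_over (ps_over k) P & P.[s] = 0].
Proof.
have hornerE (a : nat -> PS) d : ps_peval a d s = (\poly_(j < d.+1) a j).[s].
  apply: funext => I; rewrite horner_poly ps_sumE.
  by apply: eq_bigr => j _; rewrite ps_exp_expr.
split=> [[d [a [ka [j jd [I ajI]] Ps]]]|[P [P_neq0 kP Ps]]].
  exists (\poly_(j < d.+1) a j); split.
  - apply/eqP => /(congr1 (fun P : {poly PS} => P`_j)).
    by rewrite coef_poly ltnS jd coef0 => aj0; rewrite aj0 ps0E eqxx in ajI.
  - by move=> i I'; rewrite coef_poly; case: ifP => _; [apply: ka | apply: subfield0].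
  - by rewrite -hornerE; apply: funext => I'; rewrite Ps.
exists (size P).-1, (fun j => P`_j); split => //.
  exists (size P).-1 => //; apply/ps_neq0P.
  by rewrite -lead_coefE lead_coef_eq0.
by move=> I; rewrite hornerE prednK ?size_poly_gt0 // coefK Ps.
Qed.

Lemma psC_lreg (c : K) : c != 0 -> GRing.lreg (psC c : PS).
Proof.
move=> c_neq0 f g eq_fg; apply: funext => I; apply: (mulfI c_neq0).
by rewrite -!psCM eq_fg.
Qed.

(* The row v of the constants w_t satisfies v A = s v, and its nonzero entry
   is regular in k[[X]]. *)
Lemma algebraic_of_stable_span (s : PS) (w : seq K) (t0 : nat) :
  (t0 < size w)%N -> w`_t0 != 0 -> (forall I t, kspan k w (s I * w`_t)) ->
  ps_algebraic k s.
Proof.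
move=> t0_lt wt0 sw_span.
have [cf cfE] : exists cf : M * nat -> nat -> K, forall It, (forall i, k (cf It i)) /\
    s It.1 * w`_It.2 = \sum_(i < size w) cf It i * w`_i.
  suff cfI (It : M * nat) : exists c : nat -> K, (forall i, k (c i)) /\
      s It.1 * w`_It.2 = \sum_(i < size w) c i * w`_i.
    by have [cf cfE] := choice cfI; exists cf.
  by have [c kc E] := sw_span It.1 It.2; exists c.
pose A : 'M[PS]_(size w) := \matrix_(i, t) (fun I => cf (I, nat_of_ord t) i).
pose v : 'rV[PS]_(size w) := \row_t psC w`_t.
have vA : v *m (s%:M - A) = 0.
  apply/rowP => t; rewrite mulmxBr mul_mx_scalar !mxE; apply: funext => I.
  rewrite psBE ps0E mulrC psCM [_ * s I]mulrC ps_sumE.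
  have /= -> := proj2 (cfE (I, nat_of_ord t)).
  by apply/eqP; rewrite subr_eq0; apply/eqP/eq_bigr => i _; rewrite !mxE psCM mulrC.
apply/ps_algebraicP; exists (char_poly A); split.
- exact/monic_neq0/char_poly_monic.
- apply: poly_over_char_poly => [|||||i j I]; rewrite ?mxE.
  + exact: ps_over0.
  + exact: ps_over1.
  + exact: ps_overN.
  + exact: ps_overD.
  + exact: ps_overM.
  + exact: (proj1 (cfE _)).
- apply: (horner_char_poly_eq0 (t := Ordinal t0_lt) vA); rewrite mxE.
  exact: psC_lreg.
Qed.

Lemma finite_degree_algebraic (s : PS) :
  finite_degree k (gen_field k (fun y => exists I, y = s I)) -> ps_algebraic k s.
Proof.
set L := gen_field k _ => -[u finL].
have subL : is_subfield L := gen_field_subfield k _.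
have kL a x : k a -> L x -> L (a * x).
  by move=> ka Lx; apply: (subfieldM subL) => //; apply: gen_field_base.
have [w [wL w_span]] := kspan_basis_in subk (subfield0 subL) (subfieldB subL) kL finL.
have [t0 t0_lt wt0] := kspan_nth_neq0 (oner_neq0 K) (w_span 1 (subfield1 subL)).
apply: (algebraic_of_stable_span t0_lt wt0) => I t; apply: w_span.
apply: (subfieldM subL); first by apply: gen_field_gen; exists I.
have [lt_t|ge_t] := ltnP t (size w); first by apply: wL; apply: mem_nth.
by rewrite nth_default //; apply: (subfield0 subL).
Qed.

End FiniteImpliesAlgebraic.

(** * Algebraic implies finite degree *)

Section DeflatePoly.
Variables (R : nzRingType) (p : nat).

Definition deflate_poly (P : {poly R}) := \poly_(j < ((size P).-1 %/ p).+1) P`_(j * p).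

Lemma deflate_polyK (P : {poly R}) : (0 < p)%N ->
  (forall i, P`_i != 0 -> (p %| i)%N) -> deflate_poly P \Po 'X^p = P.
Proof.
move=> p_gt0 P_dvd; apply/polyP => i; rewrite coef_comp_poly_Xn //.
have [p_i|p_i] := boolP (p %| i)%N; last by apply/esym/eqP; apply: contraNT p_i => /P_dvd.
rewrite coef_poly divnK //; case: ltnP => // le_i.
rewrite nth_default //; move: le_i; case: (size P) => //= N le_i.
apply: leq_trans (ltn_ceil N p_gt0) _.
by rewrite -[X in (_ <= X)%N](divnK p_i) leq_mul2r le_i orbT.
Qed.

Lemma size_deflate_poly (P : {poly R}) : (1 < p)%N -> (1 < size P)%N ->
  (size (deflate_poly P) < size P)%N.
Proof.
move=> p_gt1 P_gt1; rewrite /deflate_poly; apply: leq_ltn_trans (size_poly _ _) _.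
by case: (size P) P_gt1 => [|[|N]] // _; rewrite ltnS ltn_Pdiv.
Qed.
End DeflatePoly.

Lemma deriv_eq0_pchar (K : fieldType) n (P : {poly pseries K n}) :
  P^`() = 0 -> (1 < size P)%N ->
  exists2 p, p \in [pchar K] & forall i, P`_i != 0 -> (p %| i)%N.
Proof.
move=> P'0 P_gt1; have natP i : P`_i.+1 != 0 -> i.+1%:R == 0 :> K.
  move=> /ps_neq0P [I PI]; have := congr1 (fun f => f I) (coef_deriv P i).
  rewrite P'0 coef0 ps0E psMnE => /esym/eqP.
  by rewrite -(mulr_natr (P`_i.+1 I)) mulf_eq0 (negbTE PI).
set N := (size P).-1; have N_gt0 : (0 < N)%N by rewrite /N -subn1 subn_gt0.
have [p pcharK] : exists p, p \in [pchar K].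
  apply: (natf0_pchar N_gt0); rewrite -(prednK N_gt0); apply: natP; rewrite prednK //.
  by rewrite /N -lead_coefE lead_coef_eq0 -size_poly_gt0 ltnW.
by exists p => // -[|i] Pi; rewrite ?dvdn0 // (dvdn_pcharf pcharK) natP.
Qed.

Section AlgebraicImpliesFinite.
Variables (K : closedFieldType) (n : nat) (k : K -> Prop).
Local Notation PS := (pseries K n).
Hypotheses (subk : is_subfield k) (fgk : fg_over_perfect k).
Hypothesis alg_k : forall x : K, algebraic_over k x.

Lemma algebraic_finite_degree (s : PS) (P : {poly PS}) : P != 0 ->
  poly_over (ps_over k) P -> P.[s] = 0 ->
  finite_degree k (gen_field k (fun y => exists I, y = s I)).
Proof.
move sP : (size P) => m; elim/ltn_ind: m s P sP => m IH s P sP P_neq0 kP Ps.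
have P'_over : poly_over (ps_over k) P^`().
  by move=> i; rewrite coef_deriv; apply: ps_overMn.
have [P's_eq0|/ps_min_supp [J0 [P's_J0 P's_ge]]] := eqVneq P^`().[s] 0; last first.
  exact: (separable_finite subk kP Ps P's_J0 P's_ge alg_k).
have [P'_eq0|P'_neq0] := eqVneq P^`() 0; last first.
  by apply: (IH (size P^`())) P'_neq0 P'_over P's_eq0 => //; rewrite -sP lt_size_deriv.
have P_gt1 : (1 < size P)%N by apply: (root_size_gt1 (a := s) P_neq0); apply/rootP.
have [p pcharK P_dvd] := deriv_eq0_pchar P'_eq0 P_gt1.
have p_gt1 : (1 < p)%N by rewrite prime_gt1 // (pcharf_prime pcharK).
have PQ := deflate_polyK (ltnW p_gt1) P_dvd; set Q := deflate_poly p P in PQ.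
apply: (finite_degree_frobenius pcharK) => //.
apply: (IH (size Q) _ (s ^+ p) Q) => //.
- by rewrite -sP size_deflate_poly.
- by apply: contraNneq P_neq0 => Q0; rewrite -PQ Q0 comp_poly0.
- by move=> i; rewrite coef_poly; case: ifP => _; [apply: kP | apply: ps_over0].
- by rewrite -Ps -PQ horner_comp hornerXn.
Qed.

End AlgebraicImpliesFinite.

Theorem corollary3p3 (kbar : closedFieldType) (k : kbar -> Prop) (n : nat)
    (sigma : pseries kbar n) :
  is_subfield k -> fg_over_perfect k ->
  (forall x : kbar, algebraic_over k x) ->
  ps_algebraic k sigma <->
  finite_degree k (gen_field k (fun y => exists I, y = sigma I)).
Proof.
move=> subk fgk alg_k; split; last exact: finite_degree_algebraic.
case/(ps_algebraicP subk) => P [P_neq0 kP Ps].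
exact: (algebraic_finite_degree subk fgk alg_k P_neq0 kP Ps).
Qed.
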